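(* Let $p\ge1$ and let $q\in[1,\infty]$ satisfy $\frac1p+\frac1q=1$. Then the function $f(\mathbf s,\mathbf u)$ is continuous on $\mathcal S\times\mathcal U$. Additionally, for any fixed $\mathbf s\in\mathcal S$, $f(\mathbf s,\mathbf u)$ is Lipschitz continuous in $\mathbf u$ with respect to $\|\cdot\|_p$, with Lipschitz constant $L:=\max_{\mathbf y\in\mathcal Y}\|\mathbf y\|_q<\infty$.
   Context: $n\ge1$, $T>0$, $\mathcal S=\{\mathbf s\in\mathbb R^n:\mathbf s\ge0,\sum_is_i\le T\}$; $\mathcal U\subseteq\mathbb R^n$ is the support set of the service durations. Costs $\mathbf c,\mathbf d\in\mathbb R^n_+$, $C\ge0$ with $d_{i+1}-d_i\le c_{i+1}$ for $i=1,\dots,n-1$. $f(\mathbf s,\mathbf u)$ is the optimal value of $\min_{\mathbf w\in\mathbb R^{n+1},\mathbf v\in\mathbb R^n}\sum_{i=1}^n(c_iw_i+d_iv_i)+Cw_{n+1}$ s.t. $w_i-v_{i-1}=u_{i-1}+w_{i-1}-s_{i-1}$ ($i=2,\dots,n+1$), $\mathbf w\ge0,w_1=0,\mathbf v\ge0$. $\mathcal Y=\{\mathbf y\in\mathbb R^n:-y_i\le d_i\ \forall i;\ y_{i-1}-y_i\le c_i\ (i=2,\dots,n);\ y_n\le C\}$. *)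

From HB Require Import structures.
From mathcomp Require Import all_boot all_order all_algebra.
From mathcomp Require Import all_classical all_reals all_analysis.
Set Implicit Arguments. Unset Strict Implicit. Unset Printing Implicit Defensive.
Import Order.TTheory GRing.Theory Num.Theory.
Import numFieldNormedType.Exports.
Local Open Scope classical_set_scope.
Local Open Scope ring_scope.

(* Indexing convention: paper index i in {1..n} corresponds to k = i-1 in 'I_n
   (or in nat for the decision variables w, v); w_{n+1} is w n. *)

Section Defs.
Variable R : realType.
Variable n : nat.

Definition Sset (T : R) : set 'rV[R]_n :=
  [set s | (forall i : 'I_n, 0 <= s ord0 i) /\ \sum_(i < n) s ord0 i <= T].

Definition lp_feasible (s u : 'rV[R]_n) (w v : nat -> R) : Prop :=
  w 0%N = 0 /\
  (forall k : nat, (k <= n)%N -> 0 <= w k) /\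
  (forall k : 'I_n, 0 <= v k) /\
  (forall k : 'I_n, w k.+1 - v k = u ord0 k + w k - s ord0 k).

Definition lp_obj (c d : 'rV[R]_n) (C : R) (w v : nat -> R) : R :=
  \sum_(k < n) (c ord0 k * w k + d ord0 k * v k) + C * w n.

Definition fval (c d : 'rV[R]_n) (C : R) (s u : 'rV[R]_n) : R :=
  inf [set x | exists w v, lp_feasible s u w v /\ x = lp_obj c d C w v].

Definition Yset (c d : 'rV[R]_n) (C : R) : set 'rV[R]_n :=
  [set y | (forall i : 'I_n, - y ord0 i <= d ord0 i) /\
           (forall i j : 'I_n, val j = (val i).+1 -> y ord0 i - y ord0 j <= c ord0 j) /\
           (forall i : 'I_n, (val i).+1 = n -> y ord0 i <= C)].

(* l_q norm for q in [1, +oo] (an extended real); -oo is meaningless, set to 0 *)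
Definition lqnorm (q : \bar R) (x : 'rV[R]_n) : R :=
  match q with
  | EFin r => (\sum_(i < n) `|x ord0 i| `^ r) `^ r^-1
  | +oo%E => \big[Num.max/0]_(i < n) `|x ord0 i|
  | -oo%E => 0
  end.

End Defs.

From HB Require Import structures.
From mathcomp Require Import all_boot all_order all_algebra.
From mathcomp Require Import all_classical all_reals all_analysis.
From mathcomp Require Import ring lra.
Import Order.TTheory GRing.Theory Num.Theory.
Import numFieldNormedType.Exports.
Local Open Scope classical_set_scope.
Local Open Scope ring_scope.

Set Implicit Arguments. Unset Strict Implicit. Unset Printing Implicit Defensive.

(* f(s, u) only depends on the net inflows x = u - s and is the value of a
   linear program whose dual feasible set is Y.  Weak duality holds, and the
   greedy primal solution given by Lindley's recursion
   w_(k+1) = max(w_k + x_k, 0) is matched by a dual solution built backwards by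
   complementary slackness, so f(s, u) = max_(y in Y) <y, u - s>.  By Hoelder,
   |f(s, u) - f(s', u')| <= L ||(u - s) - (u' - s')||_p with
   L = max_(y in Y) ||y||_q, which exists because Y is a closed bounded
   polyhedron and ||.||_q is continuous; this bound gives both claims. *)

Section TruncatedLP.
Variables (R : realType) (n : nat) (c d : nat -> R).

Definition primal_feasible (x w v : nat -> R) : Prop :=
  [/\ w 0%N = 0, forall k, (k <= n)%N -> 0 <= w k,
      forall k, (k < n)%N -> 0 <= v k
    & forall k, (k < n)%N -> w k.+1 - v k = x k + w k].

(* The first [m] periods, the waiting time [w m] left at the horizon being
   charged [Cm] per unit: [trunc_obj n C] is the objective of [fval], and
   [dual_feasible n C] describes [Yset]. *)
Definition trunc_obj (m : nat) (Cm : R) (w v : nat -> R) : R :=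
  \sum_(0 <= k < m) (c k * w k + d k * v k) + Cm * w m.

Definition dual_feasible (m : nat) (Cm : R) (y : nat -> R) : Prop :=
  [/\ forall k, (k < m)%N -> - y k <= d k,
      forall k, (k.+1 < m)%N -> y k - y k.+1 <= c k.+1
    & (0 < m)%N -> y m.-1 <= Cm].

Definition pairing (m : nat) (y x : nat -> R) : R := \sum_(0 <= k < m) y k * x k.

Lemma dual_feasible_trunc m Cm y :
  dual_feasible m.+1 Cm y -> dual_feasible m (y m + c m) y.
Proof.
case=> yd yc _; split=> [k km|k km|m0]; [exact/yd/ltnW | exact/yc/ltnW |].
by have := yc m.-1; rewrite prednK // => /(_ (ltnSn _)); lra.
Qed.

Lemma weak_duality x w v m Cm y : primal_feasible x w v -> (m <= n)%N ->
  dual_feasible m Cm y -> pairing m y x <= trunc_obj m Cm w v.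
Proof.
case=> w0 w_ge0 v_ge0 flow; elim: m Cm => [|m IHm] Cm mn ydual.
  by rewrite /pairing /trunc_obj !big_geq // w0 mulr0 addr0.
have := IHm _ (ltnW mn) (dual_feasible_trunc ydual).
rewrite /pairing /trunc_obj !big_nat_recr //=.
case: ydual => yd _ yC.
have slack_v : 0 <= (d m + y m) * v m.
  by apply: mulr_ge0; [have := yd m (ltnSn _) | exact: v_ge0]; lra.
have slack_w : 0 <= (Cm - y m) * w m.+1.
  by apply: mulr_ge0; [have := yC (ltn0Sn _) | exact: w_ge0]; rewrite subr_ge0.
have -> : x m = w m.+1 - v m - w m by have := flow m mn; lra.
nra.
Qed.

Lemma dual_feasible_le m Cm y k : dual_feasible m Cm y -> (k < m)%N ->
  y k <= Cm + \sum_(k.+1 <= j < m) c j.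
Proof.
elim: m Cm => // m IHm Cm ydual; rewrite ltnS leq_eqVlt => /orP[/eqP->|km].
  by rewrite big_geq // addr0; case: ydual => _ _ /(_ (ltn0Sn m)).
have := IHm _ (dual_feasible_trunc ydual) km.
case: ydual => _ _ /(_ (ltn0Sn m)) /= ym_le.
by rewrite big_nat_recr //=; lra.
Qed.

Fixpoint greedy_w (x : nat -> R) (k : nat) : R :=
  if k is k'.+1 then Num.max (greedy_w x k' + x k') 0 else 0.

Arguments greedy_w : simpl never.

Lemma greedy_wS x k : greedy_w x k.+1 = Num.max (greedy_w x k + x k) 0.
Proof. by []. Qed.

Definition greedy_v (x : nat -> R) (k : nat) : R :=
  Num.max (- (greedy_w x k + x k)) 0.

Lemma greedy_feasible x : primal_feasible x (greedy_w x) (greedy_v x).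
Proof.
split=> // [[|k] _|k _|k _]; rewrite ?greedy_wS ?le_max ?lexx ?orbT //.
rewrite /greedy_v; case: (lerP 0 (greedy_w x k + x k)) => h.
  by rewrite (max_idPr _); lra.
by rewrite (max_idPl _); lra.
Qed.

Lemma greedy_complementary x k : greedy_v x k = 0 \/ greedy_w x k.+1 = 0.
Proof.
rewrite /greedy_v greedy_wS; case: (lerP 0 (greedy_w x k + x k)) => h.
  by left; apply/max_idPr; lra.
by right.
Qed.

Lemma dual_feasible_extend m Cm ym y : - d m <= ym <= Cm ->
  dual_feasible m (ym + c m) y ->
  dual_feasible m.+1 Cm (fun k => if k == m then ym else y k).
Proof.
case/andP=> ym_ge ym_le [yd yc yC]; split=> [k|k|_]; last by rewrite eqxx.
  rewrite ltnS leq_eqVlt => /orP[/eqP->|km]; first by rewrite eqxx; lra.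
  by rewrite ltn_eqF //; exact: yd.
rewrite ltnS => km; rewrite (ltn_eqF km).
move: km; rewrite leq_eqVlt => /orP[/eqP km|km].
  by subst m; rewrite eqxx; have /= := yC (ltn0Sn k); lra.
by rewrite ltn_eqF //; exact: yc.
Qed.

Hypothesis d_step : forall k, (k.+1 < n)%N -> d k.+1 - d k <= c k.+1.

Lemma strong_duality x m Cm : (m <= n)%N -> ((0 < m)%N -> - d m.-1 <= Cm) ->
  exists2 y, dual_feasible m Cm y &
    trunc_obj m Cm (greedy_w x) (greedy_v x) = pairing m y x.
Proof.
case: (greedy_feasible x) => _ w_ge0 _ flow.
elim: m Cm => [|m IHm] Cm mn dC.
  exists (fun=> 0); first by split.
  by rewrite /pairing /trunc_obj !big_geq // mulr0 addr0.
(* complementary slackness with the greedy solution *)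
pose ym := if 0 < greedy_w x m.+1 then Cm else - d m.
have ym_ge : - d m <= ym by rewrite /ym; case: ifP => // _; exact: dC.
have ym_le : ym <= Cm by rewrite /ym; case: ifP => // _; exact: dC.
have [y ydual obj_y] : exists2 y, dual_feasible m (ym + c m) y &
    trunc_obj m (ym + c m) (greedy_w x) (greedy_v x) = pairing m y x.
  apply: IHm => [|m0]; first exact: ltnW.
  by have := d_step (k := m.-1); rewrite prednK // => /(_ mn); lra.
exists (fun k => if k == m then ym else y k).
  by apply: dual_feasible_extend => //; rewrite ym_ge ym_le.
rewrite /pairing /trunc_obj [in RHS]big_nat_recr //= eqxx.
rewrite (@eq_big_nat _ _ _ 0 m _ (fun k => y k * x k)); last first.
  by move=> k /andP[_ km]; rewrite ltn_eqF.
move: obj_y; rewrite /pairing /trunc_obj big_nat_recr //= => <-.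
have slack : (d m + ym) * greedy_v x m + (Cm - ym) * greedy_w x m.+1 = 0.
  rewrite /ym; case: ifP => [w_gt0|w_le0].
    case: (greedy_complementary x m) => [->|w0]; last by rewrite w0 ltxx in w_gt0.
    by rewrite subrr mulr0 mul0r addr0.
  have -> : greedy_w x m.+1 = 0 by apply/eqP; rewrite eq_le w_ge0 // andbT leNgt w_le0.
  by rewrite subrr !mul0r mulr0 addr0.
have -> : x m = greedy_w x m.+1 - greedy_v x m - greedy_w x m by have := flow m mn; lra.
by apply/subr0_eq; rewrite -slack; ring.
Qed.

End TruncatedLP.

Lemma continuous_normr_powR (R : realType) (s : R) :
  0 < s -> continuous (fun t : R => `|t| `^ s).
Proof.
move=> s_gt0 t; have [->|t_neq0] := eqVneq t 0.
  apply/cvgrPdist_lt => e e_gt0.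
  have e_powK : (e `^ s^-1) `^ s = e.
    by rewrite -powRrM mulVf ?gt_eqF // powRr1 // ltW.
  near=> x.
  rewrite normr0 powR0 ?gt_eqF // sub0r normrN ger0_norm ?powR_ge0 // -e_powK.
  apply: gt0_ltr_powR; rewrite ?inE ?nnegrE ?powR_ge0 //.
  by near: x; apply: (@pseudometric_normed_Zmodule.nbhs0_lt _ R^o); exact: powR_gt0.
apply: (@continuous_comp _ _ _ (Num.norm : R -> R) (fun x => x `^ s)).
  exact: norm_continuous.
apply/differentiable_continuous/derivable1_diffP/derivable_powR.
by rewrite in_itv /= andbT normr_gt0.
Unshelve. all: by end_near. Qed.

Section LqNorm.
Variables (R : realType) (n : nat).

Lemma lqnorm_continuous (q : \bar R) : (0 < q)%E -> continuous (@lqnorm R n q).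
Proof.
have coord_comp_cont (f : R -> R) (i : 'I_n) : continuous f ->
    continuous (fun y : 'rV[R]_n => f (y ord0 i)).
  by move=> f_cont y; apply: continuous_comp (f_cont _); exact: coord_continuous.
case: q => [r|_|//] r_gt0.
  have -> : @lqnorm R n r%:E = fun y => `|\sum_(i < n) `|y ord0 i| `^ r| `^ r^-1.
    by apply: funext => y /=; rewrite ger0_norm // sumr_ge0 // => i _; exact: powR_ge0.
  move=> y; apply: (@continuous_comp _ _ _ _ (fun t => `|t| `^ r^-1)); last first.
    by apply: continuous_normr_powR; rewrite invr_gt0.
  apply: continuous_big => [|i _]; first exact: add_continuous.
  exact: coord_comp_cont (continuous_normr_powR r_gt0).
apply: continuous_big => [|i _]; first exact: max_continuous.
exact: coord_comp_cont (@norm_continuous _ R^o).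
Qed.

Lemma eq_lqnorm (q : \bar R) (x z : 'rV[R]_n) :
  (forall i, `|x ord0 i| = `|z ord0 i|) -> lqnorm q x = lqnorm q z.
Proof.
move=> xz; case: q => [r| |] /=; last by [].
  by congr (_ `^ _); apply: eq_bigr => i _; rewrite xz.
by apply: eq_bigr => i _; rewrite xz.
Qed.

Lemma lqnormN (q : \bar R) (x : 'rV[R]_n) : lqnorm q (- x) = lqnorm q x.
Proof. by apply: eq_lqnorm => i; rewrite mxE normrN. Qed.

Lemma lqnorm0 (r : R) : r != 0 -> lqnorm r%:E (0 : 'rV[R]_n) = 0.
Proof.
move=> r_neq0; rewrite -[LHS]/((\sum_(i < n) `|(0 : 'rV[R]_n) ord0 i| `^ r) `^ r^-1).
by rewrite big1 ?powR0 ?invr_eq0 // => i _; rewrite mxE normr0 powR0.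
Qed.

End LqNorm.

Section FiniteHoelder.
Variables (R : realType) (I : finType).

Lemma sum_powR_eq0 (a : I -> R) (r : R) : (forall i, 0 <= a i) -> 0 < r ->
  (\sum_i a i `^ r) `^ r^-1 = 0 -> forall i, a i = 0.
Proof.
move=> a_ge0 r_gt0 /eqP; rewrite powR_eq0 => /andP[/eqP sum0 _] i.
apply: (@powR_eq0_eq0 _ _ r).
exact: (psumr_eq0P (fun j _ => powR_ge0 (a j) r) sum0).
Qed.

Lemma sum_powR_normalized (a : I -> R) (r : R) : (forall i, 0 <= a i) -> 0 < r ->
  0 < (\sum_i a i `^ r) `^ r^-1 ->
  \sum_i (a i / (\sum_i a i `^ r) `^ r^-1) `^ r = 1.
Proof.
move=> a_ge0 r_gt0; set S := \sum_i a i `^ r; set A := S `^ r^-1 => A_gt0.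
have S_ge0 : 0 <= S by apply: sumr_ge0 => i _; exact: powR_ge0.
have A_powr : A `^ r = S by rewrite -powRrM mulVf ?gt_eqF // powRr1.
have S_neq0 : S != 0 by rewrite -A_powr powR_eq0 negb_and gt_eqF.
have termE i : (a i / A) `^ r = a i `^ r / S.
  rewrite powRM // ?invr_ge0 ?ltW //.
  by rewrite -powR_inv1 ?ltW // powRAC powR_inv1 ?powR_ge0 // A_powr.
by under eq_bigr do rewrite termE; rewrite -mulr_suml mulfV.
Qed.

Lemma young_scaled (x y A B p q : R) : 0 <= x -> 0 <= y -> 0 < A -> 0 < B ->
  0 < p -> 0 < q -> p^-1 + q^-1 = 1 ->
  x * y <= A * B * ((x / A) `^ p / p + (y / B) `^ q / q).
Proof.
move=> x_ge0 y_ge0 A_gt0 B_gt0 p_gt0 q_gt0 pq.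
have := conjugate_powR (divr_ge0 x_ge0 (ltW A_gt0)) (divr_ge0 y_ge0 (ltW B_gt0)) p_gt0 q_gt0 pq.
move/(ler_wpM2l (mulr_ge0 (ltW A_gt0) (ltW B_gt0))); apply: le_trans.
by rewrite mulrACA (mulrCA A) mulfV ?gt_eqF // (mulrCA B) mulfV ?gt_eqF // !mulr1.
Qed.

Lemma hoelder_sum (a b : I -> R) (p q : R) :
  0 < p -> 0 < q -> p^-1 + q^-1 = 1 ->
  (forall i, 0 <= a i) -> (forall i, 0 <= b i) ->
  \sum_i a i * b i <= (\sum_i a i `^ p) `^ p^-1 * (\sum_i b i `^ q) `^ q^-1.
Proof.
move=> p_gt0 q_gt0 pq a_ge0 b_ge0.
set A := (\sum_i a i `^ p) `^ p^-1; set B := (\sum_i b i `^ q) `^ q^-1.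
have [A0|A_neq0] := eqVneq A 0.
  have a0 := sum_powR_eq0 a_ge0 p_gt0 A0.
  by rewrite big1 ?mulr_ge0 ?powR_ge0 // => i _; rewrite a0 mul0r.
have [B0|B_neq0] := eqVneq B 0.
  have b0 := sum_powR_eq0 b_ge0 q_gt0 B0.
  by rewrite big1 ?mulr_ge0 ?powR_ge0 // => i _; rewrite b0 mulr0.
have A_gt0 : 0 < A by rewrite lt0r A_neq0 powR_ge0.
have B_gt0 : 0 < B by rewrite lt0r B_neq0 powR_ge0.
have normA : \sum_i (a i / A) `^ p = 1 := sum_powR_normalized a_ge0 p_gt0 A_gt0.
have normB : \sum_i (b i / B) `^ q = 1 := sum_powR_normalized b_ge0 q_gt0 B_gt0.
clearbody A B.
have young i := young_scaled (a_ge0 i) (b_ge0 i) A_gt0 B_gt0 p_gt0 q_gt0 pq.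
apply: le_trans (ler_sum _ (fun i _ => young i)) _.
by rewrite -mulr_sumr big_split /= -!mulr_suml normA normB !mul1r pq mulr1.
Qed.

End FiniteHoelder.

Definition rowdot (R : ringType) (n : nat) (y x : 'rV[R]_n) : R :=
  \sum_(i < n) y ord0 i * x ord0 i.

Lemma rowdotB (R : ringType) (n : nat) (y x z : 'rV[R]_n) :
  rowdot y (x - z) = rowdot y x - rowdot y z.
Proof. by rewrite /rowdot -sumrB; apply: eq_bigr => i _; rewrite !mxE mulrBr. Qed.

Definition hoelder_conjugates (R : realType) (p : R) (q : \bar R) : Prop :=
  (q = +oo%E /\ p = 1) \/ (exists r : R, q = r%:E /\ 1 <= r /\ p^-1 + r^-1 = 1).

Lemma hoelder_conjugates_gt0 (R : realType) (p : R) (q : \bar R) :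
  hoelder_conjugates p q -> (0 < q)%E.
Proof. by case=> [[-> _]|[r [-> [r_ge1 _]]]] //; rewrite lte_fin (lt_le_trans ltr01). Qed.

Lemma rowdot_hoelder (R : realType) (n : nat) (p : R) (q : \bar R) (y x : 'rV[R]_n) :
  1 <= p -> hoelder_conjugates p q ->
  `|rowdot y x| <= lqnorm q y * lqnorm p%:E x.
Proof.
move=> p_ge1 pq; apply: le_trans (ler_norm_sum _ _ _) _.
under eq_bigr do rewrite normrM.
case: pq => [[-> ->]|[r [-> [r_ge1 pr]]]] /=.
  rewrite invr1 powRr1; last by apply: sumr_ge0 => i _; exact: powR_ge0.
  rewrite mulr_sumr; apply: ler_sum => i _; rewrite powRr1 //.
  by apply: ler_wpM2r => //; exact: (le_bigmax _ (fun i => `|y ord0 i|) i).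
rewrite addrC in pr; apply: hoelder_sum => //.
  exact: lt_le_trans r_ge1.
exact: lt_le_trans p_ge1.
Qed.

Lemma continuous_dominated (T : topologicalType) (R : realType) (V : normedModType R)
    (F : T -> R) (g : T -> V) (N : V -> R) (L : R) :
  continuous g -> continuous N -> N 0 = 0 ->
  (forall t t', `|F t - F t'| <= L * N (g t - g t')) -> continuous F.
Proof.
move=> g_cont N_cont N0 F_le t.
have bound_cvg : L * N (g t' - g t) @[t' --> t] --> (0 : R).
  have -> : (0 : R) = L * N (g t - g t) by rewrite subrr N0 mulr0.
  apply: cvgM; first exact: cvg_cst.
  apply: (@continuous_comp _ _ _ (fun t' => g t' - g t) N); last exact: N_cont.
  by apply: cvgB; [exact: g_cont | exact: cvg_cst].
apply/cvgrPdist_lt => e e_gt0; move/cvgrPdist_lt: bound_cvg => /(_ e e_gt0).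
apply: filterS => t'; rewrite sub0r normrN; apply: le_lt_trans.
by rewrite distrC; apply: le_trans (F_le t' t) (ler_norm _).
Qed.

Lemma closed_le_family (T : topologicalType) (R : realType) (I : Type)
    (P : I -> Prop) (f : I -> T -> R) (a : I -> R) :
  (forall k, continuous (f k)) -> closed [set y | forall k, P k -> f k y <= a k].
Proof.
move=> f_cont; have -> : [set y | forall k, P k -> f k y <= a k] =
    \bigcap_(k in P) (f k @^-1` [set x | x <= a k]) by apply/seteqP; split.
apply: closed_bigI => k _.
by move/continuous_closedP: (f_cont k); apply; exact: closed_le.
Qed.

Definition natcoord (R : realType) (n : nat) (a : 'rV[R]_n) (k : nat) : R :=
  if insub k is Some i then a ord0 i else 0.

Lemma natcoordE (R : realType) (n : nat) (a : 'rV[R]_n) (i : 'I_n) :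
  natcoord a i = a ord0 i.
Proof. by rewrite /natcoord valK. Qed.

Lemma natcoord_row (R : realType) (n : nat) (y : nat -> R) k : (k < n)%N ->
  natcoord (\row_(i < n) y i) k = y k.
Proof. by move=> kn; rewrite /natcoord; case: insubP => [i _ <-|]; rewrite ?mxE ?kn. Qed.

Lemma natcoord_ge0 (R : realType) (n : nat) (a : 'rV[R]_n) k :
  (forall i, 0 <= a ord0 i) -> 0 <= natcoord a k.
Proof. by rewrite /natcoord; case: insub. Qed.

Lemma pairing_natcoord (R : realType) (n : nat) (y x : 'rV[R]_n) :
  pairing n (natcoord y) (natcoord x) = rowdot y x.
Proof. by rewrite /pairing big_mkord; apply: eq_bigr => i _; rewrite !natcoordE. Qed.

Lemma inf_attained (R : realType) (E : set R) x : E x -> lbound E x -> inf E = x.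
Proof.
move=> Ex xlb; apply/eqP; rewrite eq_le lb_le_inf ?andbT //; last by exists x.
by apply: ge_inf => //; exists x.
Qed.

Section ValueFunction.
Variables (R : realType) (n : nat) (c d : 'rV[R]_n) (C : R).

Lemma lp_feasibleE (s u : 'rV[R]_n) w v :
  lp_feasible s u w v <-> primal_feasible n (natcoord (u - s)) w v.
Proof.
split=> [[w0 [w_ge0 [v_ge0 flow]]]|[w0 w_ge0 v_ge0 flow]].
  split=> // k kn; first exact: (v_ge0 (Ordinal kn)).
  by have := flow (Ordinal kn); rewrite (natcoordE (u - s) (Ordinal kn)) !mxE; lra.
split=> //; split=> //; split=> k; first exact: v_ge0.
by have := flow k (ltn_ord k); rewrite natcoordE !mxE; lra.
Qed.

Lemma lp_objE w v : lp_obj c d C w v = trunc_obj (natcoord c) (natcoord d) n C w v.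
Proof. by rewrite /trunc_obj big_mkord; congr (_ + _); apply: eq_bigr => i _; rewrite !natcoordE. Qed.

Lemma Yset_dual_feasible y :
  Yset c d C y -> dual_feasible (natcoord c) (natcoord d) n C (natcoord y).
Proof.
case=> yd [yc yC]; split=> [k kn|k kn|n_gt0].
- by have := yd (Ordinal kn); rewrite !(natcoordE _ (Ordinal kn)).
- have := yc (Ordinal (ltnW kn)) (Ordinal kn) erefl.
  by rewrite (natcoordE y (Ordinal (ltnW kn))) !(natcoordE _ (Ordinal kn)).
- have nn : (n.-1 < n)%N by rewrite prednK.
  by have := yC (Ordinal nn); rewrite (natcoordE y (Ordinal nn)) prednK //; apply.
Qed.

Lemma dual_feasible_Yset (y : nat -> R) :
  dual_feasible (natcoord c) (natcoord d) n C y -> Yset c d C (\row_(i < n) y i).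
Proof.
case=> yd yc yC; split=> [i|]; first by rewrite mxE -natcoordE; exact: yd (ltn_ord i).
split=> [i j ji|i iS]; rewrite !mxE.
  by rewrite -natcoordE ji; apply: yc; rewrite -ji ltn_ord.
by rewrite -iS in yC; exact: yC.
Qed.

Lemma Yset_closed : closed (Yset c d C).
Proof.
have coord_cont (i : 'I_n) : continuous (fun y : 'rV[R]_n => y ord0 i).
  by move=> y; exact: coord_continuous.
have closed_d := @closed_le_family 'rV[R]_n R _ (fun _ : 'I_n => True)
  (fun i y => - y ord0 i) (fun i => d ord0 i) (fun i y => continuousN (coord_cont i y)).
have closed_c := @closed_le_family 'rV[R]_n R _ (fun ij : 'I_n * 'I_n => val ij.2 = (val ij.1).+1)
  (fun ij y => y ord0 ij.1 - y ord0 ij.2) (fun ij => c ord0 ij.2)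
  (fun ij y => continuousB (coord_cont ij.1 y) (coord_cont ij.2 y)).
have closed_C := @closed_le_family 'rV[R]_n R _ (fun i : 'I_n => (val i).+1 = n)
  (fun i y => y ord0 i) (fun=> C) coord_cont.
have := closedI closed_d (closedI closed_c closed_C); congr closed.
apply/seteqP; split=> y /= [yd [yc yC]].
  by split=> [i|]; [exact: yd | split=> [i j ji|]; [exact: (yc (i, j)) | exact: yC]].
by split=> [i _|]; [exact: yd | split=> [[i j] /= ji|]; [exact: yc | exact: yC]].
Qed.

Hypotheses (C_ge0 : 0 <= C) (d_ge0 : forall i, 0 <= d ord0 i).
Hypothesis d_step : forall i j : 'I_n, val j = (val i).+1 -> d ord0 j - d ord0 i <= c ord0 j.

Lemma fval_max_dual (s u : 'rV[R]_n) :
  (exists2 y, Yset c d C y & fval c d C s u = rowdot y (u - s)) /\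
  (forall y, Yset c d C y -> rowdot y (u - s) <= fval c d C s u).
Proof.
rewrite /fval; set E := [set _ | _]; set x := natcoord (u - s).
have lbE y : Yset c d C y -> lbound E (rowdot y (u - s)).
  move=> yY _ [w [v [wv ->]]]; rewrite lp_objE -pairing_natcoord.
  by apply: weak_duality (leqnn n) (Yset_dual_feasible yY); rewrite -lp_feasibleE.
have d_stepN k : (k.+1 < n)%N -> natcoord d k.+1 - natcoord d k <= natcoord c k.+1.
  move=> kn; have := @d_step (Ordinal (ltnW kn)) (Ordinal kn) erefl.
  by rewrite (natcoordE d (Ordinal (ltnW kn))) !(natcoordE _ (Ordinal kn)).
have dC : (0 < n)%N -> - natcoord d n.-1 <= C.
  by move=> _; apply: le_trans C_ge0; rewrite oppr_le0; exact: natcoord_ge0.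
have [y ydual objE] := strong_duality d_stepN x (leqnn n) dC.
pose yr := \row_(i < n) y i.
have E_yr : E (rowdot yr (u - s)).
  exists (greedy_w x), (greedy_v x); split; first by rewrite lp_feasibleE; exact: greedy_feasible.
  rewrite lp_objE objE -pairing_natcoord /pairing.
  by apply: eq_big_nat => k /andP[_ kn]; rewrite natcoord_row.
have yrY := dual_feasible_Yset ydual.
have fvalE : inf E = rowdot yr (u - s) by apply: inf_attained; last exact: lbE.
by split=> [|z zY]; [exists yr | rewrite fvalE; exact: lbE].
Qed.

Hypothesis c_ge0 : forall i, 0 <= c ord0 i.

Lemma Yset0 : Yset c d C 0.
Proof.
split=> [i|]; first by rewrite mxE oppr0.
by split=> [i j _|i _]; rewrite !mxE ?subr0.
Qed.

Lemma Yset_norm_le y i : Yset c d C y ->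
  `|y ord0 i| <= C + \sum_(j < n) c ord0 j + \sum_(j < n) d ord0 j.
Proof.
move=> /Yset_dual_feasible ydual.
have := dual_feasible_le ydual (ltn_ord i); case: ydual => yd _ _.
have := yd _ (ltn_ord i); rewrite !natcoordE => y_ge y_le.
have tail_le : \sum_(i.+1 <= j < n) natcoord c j <= \sum_(j < n) c ord0 j.
  have -> : \sum_(j < n) c ord0 j = \sum_(0 <= j < n) natcoord c j.
    by rewrite big_mkord; apply: eq_bigr => j _; rewrite natcoordE.
  rewrite (@big_cat_nat _ _ _ i.+1 0 n) //= lerDr.
  by apply: sumr_ge0 => j _; exact: natcoord_ge0.
have d_le_sum : d ord0 i <= \sum_(j < n) d ord0 j.
  by rewrite (bigD1 i) //= lerDl; apply: sumr_ge0.
have sum_c_ge0 : 0 <= \sum_(j < n) c ord0 j by apply: sumr_ge0.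
have sum_d_ge0 : 0 <= \sum_(j < n) d ord0 j by apply: sumr_ge0.
(* [lra] does not use section hypotheses *)
by rewrite ler_norml; apply/andP; split; move: C_ge0; lra.
Qed.

Lemma Yset_compact : compact (Yset c d C).
Proof.
apply: bounded_closed_compact Yset_closed; rewrite /bounded_set /bounded_near.
near=> M => y yY /=; rewrite -[leLHS]/(mx_norm y) mx_normrE.
apply: bigmax_le => [|ij _]; first by near: M; apply: nbhs_pinfty_ge; exact: num_real.
rewrite /= (ord1 ij.1); apply: le_trans (Yset_norm_le ij.2 yY) _.
by near: M; apply: nbhs_pinfty_ge; exact: num_real.
Unshelve. all: by end_near. Qed.

Lemma fval_lipschitz (p : R) (q : \bar R) (L : R) :
  1 <= p -> hoelder_conjugates p q ->
  (forall y, Yset c d C y -> lqnorm q y <= L) ->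
  forall s u s' u', `|fval c d C s u - fval c d C s' u'| <=
    L * lqnorm p%:E ((u - s) - (u' - s')).
Proof.
move=> p_ge1 pq L_max.
have fval_sub_le s u s' u' : fval c d C s u - fval c d C s' u' <=
    L * lqnorm p%:E ((u - s) - (u' - s')).
  have [[y yY ->] _] := fval_max_dual s u.
  have [_ /(_ y yY) y_le] := fval_max_dual s' u'.
  apply: (@le_trans _ _ (rowdot y ((u - s) - (u' - s')))); first by rewrite [leRHS]rowdotB; lra.
  apply: le_trans (ler_norm _) _; apply: le_trans (rowdot_hoelder _ _ p_ge1 pq) _.
  by apply: ler_wpM2r; [exact: powR_ge0 | exact: L_max].
move=> s u s' u'; rewrite ler_norml fval_sub_le andbT lerNl opprB.
by have := fval_sub_le s' u' s u; rewrite -(opprB (u - s)) lqnormN.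
Qed.

End ValueFunction.

Theorem lemma5 (R : realType) (n : nat) (T : R) (c d : 'rV[R]_n) (C : R)
  (U : set 'rV[R]_n) (p : R) (q : \bar R) :
  (1 <= n)%N -> 0 < T ->
  (forall i : 'I_n, 0 <= c ord0 i) -> (forall i : 'I_n, 0 <= d ord0 i) -> 0 <= C ->
  (forall i j : 'I_n, val j = (val i).+1 -> d ord0 j - d ord0 i <= c ord0 j) ->
  1 <= p ->
  (q = +oo%E /\ p = 1) \/ (exists r : R, q = r%:E /\ 1 <= r /\ p^-1 + r^-1 = 1) ->
  {within [set su : 'rV[R]_n * 'rV[R]_n | Sset T su.1 /\ U su.2],
     continuous (fun su : 'rV[R]_n * 'rV[R]_n => fval c d C su.1 su.2)} /\
  exists L : R,
    (exists2 y, Yset c d C y & lqnorm q y = L) /\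
    (forall y, Yset c d C y -> lqnorm q y <= L) /\
    (forall s, Sset T s -> forall u1 u2, U u1 -> U u2 ->
       `|fval c d C s u1 - fval c d C s u2| <= L * lqnorm p%:E (u1 - u2)).
Proof.
move=> _ _ c_ge0 d_ge0 C_ge0 d_step p_ge1 pq.
have p_gt0 : 0 < p := lt_le_trans ltr01 p_ge1.
have [y0 /set_mem Yy0 y0_max] := compact_EVT_max (ex_intro _ 0 (Yset0 C_ge0 d_ge0 c_ge0))
  (Yset_compact C_ge0 d_ge0 c_ge0)
  (continuous_subspaceT (@lqnorm_continuous R n q (hoelder_conjugates_gt0 pq))).
have L_max y : Yset c d C y -> lqnorm q y <= lqnorm q y0.
  by move/mem_set; exact: y0_max.
have lip := fval_lipschitz C_ge0 d_ge0 d_step p_ge1 pq L_max.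
split.
  apply/continuous_subspaceT/(continuous_dominated (g := fun su => su.2 - su.1)).
  - by move=> su; apply: cvgB; [exact: cvg_snd | exact: cvg_fst].
  - exact: (@lqnorm_continuous R n p%:E p_gt0).
  - by apply: lqnorm0; rewrite gt_eqF.
  - by move=> su su'; exact: lip.
exists (lqnorm q y0); split; first by exists y0.
split=> [|s _ u1 u2 _ _]; first exact: L_max.
by have := lip s u1 s u2; rewrite opprB addrA subrK.
Qed.
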